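(* Let $n\ge 1$, $\nu>0$, and let $\alpha_u,\alpha_y\ge 0$ with $\max\{\alpha_u,\alpha_y\}>0$. Let $M\in\mathbb{R}^{n\times n}$ be diagonal with positive diagonal entries, let $L\in\mathbb{R}^{n\times n}$ with $L+L^T$ positive semidefinite, and let $\Pi_k$ be an $n\times n$ diagonal matrix with diagonal entries in $\{0,1\}$. Set $\gamma_1=\frac{\alpha_y^2\nu}{\alpha_y^2\nu+\alpha_u^2}$, $\gamma_2=\frac{\alpha_u^2}{\alpha_y^2\nu+\alpha_u^2}$, and assume $\gamma_1=\gamma_2=\tfrac12$. Define $$\mathbb{S}_k=\nu LM^{-1}L^T+M-\frac{1}{\alpha_y^2\nu+\alpha_u^2}(\alpha_y\nu LM^{-1}-\alpha_u I)\Pi_k M\Pi_k(\alpha_y\nu LM^{-1}-\alpha_u I)^T,$$ $L_1=\sqrt{\nu}L(I-\gamma_1\Pi_k)^{1/2}+(I-\gamma_2\Pi_k)^{1/2}M$ and $\widehat{\mathbb{S}}_k=L_1M^{-1}L_1^T$. Then every eigenvalue $\lambda$ of the pencil $(\mathbb{S}_k,\widehat{\mathbb{S}}_k)$ (i.e. $\mathbb{S}_kx=\lambda\widehat{\mathbb{S}}_kx$ for some $x\ne0$) satisfies $\lambda\in\left[\tfrac12,\,3\right]$.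
   Context: Square roots of nonnegative diagonal matrices are taken entrywise. *)

From HB Require Import structures.
From mathcomp Require Import all_boot all_order all_algebra.
From mathcomp Require Import reals.
Set Implicit Arguments. Unset Strict Implicit. Unset Printing Implicit Defensive.
Import Order.TTheory GRing.Theory Num.Theory.
Local Open Scope ring_scope.

Definition psd (R : realType) (n : nat) (A : 'M[R]_n) : Prop :=
  forall x : 'cV[R]_n, 0 <= (x^T *m A *m x) 0 0.

Definition diag_sqrt (R : realType) (n : nat) (A : 'M[R]_n) : 'M[R]_n :=
  \matrix_(i, j) (if i == j then Num.sqrt (A i i) else 0).

Definition pencil_eigenvalue (R : realType) (n : nat) (A B : 'M[R]_n)
  (lambda : R) : Prop :=
  exists2 x : 'cV[R]_n, x != 0 & A *m x = lambda *: (B *m x).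

From HB Require Import structures.
From mathcomp Require Import all_boot all_order all_algebra.
From mathcomp Require Import reals.
From mathcomp Require Import ring lra.
Set Implicit Arguments. Unset Strict Implicit. Unset Printing Implicit Defensive.
Import Order.TTheory GRing.Theory Num.Theory.
Local Open Scope ring_scope.

(* Since M, Pi and the square roots are diagonal, both quadratic forms x^T S x
   and x^T Shat x split into sums over the coordinates i of binary quadratic
   forms in x_i and b_i := sqrt(nu) (L^T x)_i / m_i; when gamma1 = gamma2 = 1/2
   these are m (b^2 + x^2) - p m (b - x)^2 / 2 and (1 - p/2) m (b + x)^2 with
   p in {0, 1}.  Coordinatewise, the first lies between 1/2 and 3 times the
   second, up to the cross term 2 m b x, whose sum is sqrt(nu) x^T L x >= 0. *)

Definition qform (R : pzRingType) (n : nat) (A : 'M[R]_n) (x : 'cV[R]_n) : R :=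
  (x^T *m A *m x) 0 0.

Section QuadraticForms.
Variables (R : comPzRingType) (n : nat).
Implicit Types (A B : 'M[R]_n) (x : 'cV[R]_n).

Lemma qformD A B x : qform (A + B) x = qform A x + qform B x.
Proof. by rewrite /qform mulmxDr mulmxDl mxE. Qed.

Lemma qformB A B x : qform (A - B) x = qform A x - qform B x.
Proof. by rewrite /qform mulmxBr mulmxBl !mxE. Qed.

Lemma qformZ a A x : qform (a *: A) x = a * qform A x.
Proof. by rewrite /qform -scalemxAr -scalemxAl mxE. Qed.

Lemma qform_tr A x : qform A^T x = qform A x.
Proof.
rewrite /qform.
have -> : x^T *m A^T *m x = (x^T *m A *m x)^T by rewrite !trmx_mul trmxK mulmxA.
by rewrite mxE.
Qed.

Lemma qform_congr A B x : qform (A *m B *m A^T) x = qform B (A^T *m x).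
Proof. by rewrite /qform trmx_mul trmxK !mulmxA. Qed.

Lemma qform_diag (d : 'rV[R]_n) x :
  qform (diag_mx d) x = \sum_i d 0 i * x i 0 ^+ 2.
Proof.
rewrite /qform mul_mx_diag !mxE; apply: eq_bigr => i _.
by rewrite !mxE mulrAC -expr2 mulrC.
Qed.

End QuadraticForms.

Lemma qform_diag_gt0 (R : realDomainType) (n : nat) (d : 'rV[R]_n)
    (x : 'cV[R]_n) :
  (forall i, 0 < d 0 i) -> x != 0 -> 0 < qform (diag_mx d) x.
Proof.
move=> d_gt0 x_neq0; rewrite qform_diag.
have terms_ge0 i : 0 <= d 0 i * x i 0 ^+ 2.
  by rewrite mulr_ge0 ?sqr_ge0 ?ltW ?d_gt0.
rewrite lt_def sumr_ge0 // andbT; apply: contra x_neq0.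
move=> /eqP/psumr_eq0P x0.
have {}x0 i : d 0 i * x i 0 ^+ 2 = 0 by exact: x0.
apply/eqP/matrixP => i j; rewrite (ord1 j) mxE; apply/eqP.
by have /eqP := x0 i; rewrite mulf_eq0 gt_eqF // sqrf_eq0.
Qed.

Lemma invmx_diag (F : fieldType) (n : nat) (d : 'rV[F]_n) :
  (forall i, d 0 i != 0) -> invmx (diag_mx d) = diag_mx (\row_i (d 0 i)^-1).
Proof.
move=> d_neq0.
have dV : diag_mx d *m diag_mx (\row_i (d 0 i)^-1) = 1%:M.
  rewrite mulmx_diag; apply/matrixP => i j; rewrite !mxE.
  by case: eqP => [->|_]; rewrite ?mulr0n // mulr1n divff.
have [d_unit _] := mulmx1_unit dV.
by rewrite -[invmx _]mulmx1 -dV mulmxA mulVmx // mul1mx.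
Qed.

Lemma diag_sqrt_diag (R : realType) (n : nat) (d : 'rV[R]_n) :
  diag_sqrt (diag_mx d) = diag_mx (\row_i Num.sqrt (d 0 i)).
Proof.
apply/matrixP => i j; rewrite !mxE.
by case: eqP => [->|_]; rewrite ?mulr0n ?eqxx ?mulr1n.
Qed.

Lemma pencil_eigenvalue_bounds (R : realType) (n : nat) (A B : 'M[R]_n)
    (a b lambda : R) :
  (forall x, x != 0 -> 0 < qform B x) ->
  (forall x, a * qform B x <= qform A x <= b * qform B x) ->
  pencil_eigenvalue A B lambda -> a <= lambda <= b.
Proof.
move=> B_pos AB_bounds [x x_neq0 Ax].
have qAx : qform A x = lambda * qform B x.
  by rewrite /qform -mulmxA Ax -scalemxAr -mulmxA mxE.
have := AB_bounds x; rewrite qAx.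
by rewrite !ler_pM2r // ?B_pos.
Qed.

Section CoordinateForms.
Variable R : realFieldType.
Implicit Types (mi pi b xi : R).

Definition schur_coord mi pi b xi : R :=
  mi * (b ^+ 2 + xi ^+ 2) - pi * (mi * (b - xi) ^+ 2 / 2).

Definition schur_approx_coord mi pi b xi : R :=
  (1 - pi / 2) * (mi * (b + xi) ^+ 2).

Lemma schur_coord_bounds mi pi b xi :
  0 < mi -> pi = 0 \/ pi = 1 ->
  [/\ schur_approx_coord mi pi b xi <= 2 * schur_coord mi pi b xi,
      schur_coord mi pi b xi + 2 * (mi * b * xi)
        <= 3 * schur_approx_coord mi pi b xi
    & (2 * (mi * b * xi) + mi * xi ^+ 2) / 4
        <= schur_approx_coord mi pi b xi].
Proof.
rewrite /schur_coord /schur_approx_coord => mi_gt0 pi01.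
have diff_sqr := mulr_ge0 (ltW mi_gt0) (sqr_ge0 (b - xi)).
have sum_sqr := mulr_ge0 (ltW mi_gt0) (sqr_ge0 (b + xi)).
by case: pi01 => ->; split; nra.
Qed.

End CoordinateForms.

Lemma balanced_weights (R : realType) (nu alpha_u alpha_y : R) :
  0 < nu -> 0 <= alpha_u -> 0 <= alpha_y ->
  alpha_y ^+ 2 * nu / (alpha_y ^+ 2 * nu + alpha_u ^+ 2) = 1 / 2 ->
  alpha_u ^+ 2 / (alpha_y ^+ 2 * nu + alpha_u ^+ 2) = 1 / 2 ->
  alpha_y != 0 /\ alpha_u = alpha_y * Num.sqrt nu.
Proof.
move=> nu_gt0 au_ge0 ay_ge0; set c := _ + _ => g1 g2.
(* a zero denominator would make both weights 0, not 1/2 *)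
have c_neq0 : c != 0.
  by apply: contra_eq_neq g1 => ->; rewrite invr0 mulr0; lra.
have half_c (t : R) : t / c = 1 / 2 -> t = c / 2.
  by move=> tc; rewrite -(divfK c_neq0 t) tc; field.
have {}g1 := half_c _ g1; have {}g2 := half_c _ g2.
split.
  apply: contra_neq c_neq0 => ay0.
  by apply/eqP; move: g1; rewrite ay0 expr0n mul0r; lra.
apply/eqP; rewrite -(@eqrXn2 _ 2) //; last by rewrite mulr_ge0 ?sqrtr_ge0.
by rewrite exprMn sqr_sqrtr ?ltW // g1 g2.
Qed.

Section Proposition4p6.
Variables (R : realType) (n : nat) (nu alpha_u alpha_y : R).
Variables (m p : 'rV[R]_n) (L : 'M[R]_n).
Hypotheses (nu_gt0 : 0 < nu) (m_gt0 : forall i, 0 < m 0 i).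
Hypothesis psdL : psd (L + L^T).
Hypothesis p01 : forall i, p 0 i = 0 \/ p 0 i = 1.
Hypotheses (ay_neq0 : alpha_y != 0) (au_def : alpha_u = alpha_y * Num.sqrt nu).

Let sn := Num.sqrt nu.
Let M := diag_mx m.
Let Pi := diag_mx p.
Let K := alpha_y * nu *: (L *m invmx M) - alpha_u *: 1%:M.
Let S := nu *: (L *m invmx M *m L^T) + M
  - (alpha_y ^+ 2 * nu + alpha_u ^+ 2)^-1 *: (K *m Pi *m M *m Pi *m K^T).
Let L1 := sn *: (L *m diag_sqrt (1%:M - 1 / 2 *: Pi))
  + diag_sqrt (1%:M - 1 / 2 *: Pi) *m M.
Let Shat := L1 *m invmx M *m L1^T.

Let b (x : 'cV[R]_n) i := sn * (L^T *m x) i 0 / m 0 i.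

Let sn_gt0 : 0 < sn. Proof. by rewrite sqrtr_gt0. Qed.
Let nu_sqr : nu = sn ^+ 2. Proof. by rewrite sqr_sqrtr // ltW. Qed.
Let m_neq0 i : m 0 i != 0. Proof. by rewrite gt_eqF. Qed.

Let invM : invmx M = diag_mx (\row_i (m 0 i)^-1).
Proof. exact: invmx_diag. Qed.

Let sqrt_Pi : diag_sqrt (1%:M - 1 / 2 *: Pi)
  = diag_mx (\row_i Num.sqrt (1 - 1 / 2 * p 0 i)).
Proof.
have -> : 1%:M - 1 / 2 *: Pi = diag_mx (\row_i (1 - 1 / 2 * p 0 i)).
  apply/matrixP => i j; rewrite !mxE.
  by case: eqP => [->|_] /=; rewrite ?mulr1n ?mulr0n ?mulr0 ?subr0.
by rewrite diag_sqrt_diag; congr diag_mx; apply/rowP => i; rewrite !mxE.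
Qed.

Let K_trE x i : (K^T *m x) i 0 = alpha_y * sn * (b x i - x i 0).
Proof.
rewrite /K invM raddfB /= !linearZ /= trmx_mul tr_diag_mx trmx1.
rewrite mulmxDl -!scalemxAl mulNmx mul1mx -mulmxA /b au_def -/sn.
set v := L^T *m x.
by rewrite mul_diag_mx !mxE nu_sqr; field.
Qed.

Let L1_trE x i : (L1^T *m x) i 0
  = Num.sqrt (1 - 1 / 2 * p 0 i) * (m 0 i * (b x i + x i 0)).
Proof.
rewrite /L1 sqrt_Pi raddfD /= !linearZ /= !trmx_mul !tr_diag_mx.
rewrite mulmxDl -!scalemxAl -!mulmxA /b; set v := L^T *m x.
by rewrite !mul_diag_mx !mxE; field.
Qed.

Lemma qform_schur x :
  qform S x = \sum_i schur_coord (m 0 i) (p 0 i) (b x i) (x i 0).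
Proof.
have PiMPi : Pi *m M *m Pi = diag_mx (\row_i (p 0 i * m 0 i)).
  rewrite !mulmx_diag; congr diag_mx; apply/rowP => i; rewrite !mxE.
  by case: (p01 i) => ->; rewrite ?mul0r ?mulr0 ?mulr1.
rewrite /S (_ : K *m Pi *m M *m Pi *m K^T = K *m (Pi *m M *m Pi) *m K^T);
  last by rewrite !mulmxA.
rewrite qformB qformD !qformZ !qform_congr PiMPi invM !qform_diag.
rewrite !mulr_sumr -big_split -sumrB /=; apply: eq_bigr => i _.
rewrite K_trE /schur_coord /b au_def -/sn; move: ((L^T *m x) i 0) => v.
rewrite !mxE nu_sqr; field.
rewrite m_neq0 -mulr2n mulrn_eq0 sqrf_eq0 mulf_eq0.
by rewrite (negbTE ay_neq0) (gt_eqF sn_gt0).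
Qed.

Lemma qform_schur_approx x :
  qform Shat x = \sum_i schur_approx_coord (m 0 i) (p 0 i) (b x i) (x i 0).
Proof.
rewrite qform_congr invM qform_diag; apply: eq_bigr => i _.
rewrite L1_trE !mxE /schur_approx_coord exprMn sqr_sqrtr; last first.
  by case: (p01 i) => ->; lra.
by field.
Qed.

Lemma cross_term_ge0 x : 0 <= \sum_i m 0 i * b x i * x i 0.
Proof.
have xLx : \sum_i m 0 i * b x i * x i 0 = sn * qform L x.
  rewrite -qform_tr /qform -mulmxA mxE mulr_sumr; apply: eq_bigr => i _.
  by rewrite /b [x^T 0 i]mxE; field.
have := psdL x; rewrite -/(qform _ x) qformD qform_tr xLx => qL.
by rewrite mulr_ge0 ?(ltW sn_gt0) //; lra.
Qed.

Lemma qform_schur_approx_gt0 x : x != 0 -> 0 < qform Shat x.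
Proof.
move=> x_neq0; have x_pos := qform_diag_gt0 m_gt0 x_neq0.
rewrite qform_diag in x_pos.
have lower : (2 * \sum_i m 0 i * b x i * x i 0
    + \sum_i m 0 i * x i 0 ^+ 2) / 4 <= qform Shat x.
  rewrite qform_schur_approx mulr_sumr -big_split mulr_suml.
  apply: ler_sum => i _.
  by have [_ _] := schur_coord_bounds (b x i) (x i 0) (m_gt0 i) (p01 i).
by have := cross_term_ge0 x; lra.
Qed.

Lemma qform_schur_bounds x :
  1 / 2 * qform Shat x <= qform S x <= 3 * qform Shat x.
Proof.
have coord i := schur_coord_bounds (b x i) (x i 0) (m_gt0 i) (p01 i).
have lower : qform Shat x <= 2 * qform S x.
  rewrite qform_schur qform_schur_approx mulr_sumr.
  by apply: ler_sum => i _; case: (coord i).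
have upper : qform S x + 2 * \sum_i m 0 i * b x i * x i 0 <= 3 * qform Shat x.
  rewrite qform_schur qform_schur_approx !mulr_sumr -big_split.
  by apply: ler_sum => i _; case: (coord i).
by have := cross_term_ge0 x; move=> cross; apply/andP; split; lra.
Qed.

Lemma schur_pencil_eigenvalue_bounds lambda :
  pencil_eigenvalue S Shat lambda -> 1 / 2 <= lambda <= 3.
Proof.
apply: pencil_eigenvalue_bounds.
  exact: qform_schur_approx_gt0.
exact: qform_schur_bounds.
Qed.

End Proposition4p6.

Theorem proposition4p6 (R : realType) (n : nat) (nu alpha_u alpha_y : R)
  (m p : 'rV[R]_n) (L : 'M[R]_n) :
  (0 < n)%N ->
  0 < nu ->
  0 <= alpha_u -> 0 <= alpha_y -> 0 < Num.max alpha_u alpha_y ->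
  (forall i, 0 < m 0 i) ->
  psd (L + L^T) ->
  (forall i, p 0 i = 0 \/ p 0 i = 1) ->
  let M := diag_mx m in
  let Pi := diag_mx p in
  let gamma1 := alpha_y ^+ 2 * nu / (alpha_y ^+ 2 * nu + alpha_u ^+ 2) in
  let gamma2 := alpha_u ^+ 2 / (alpha_y ^+ 2 * nu + alpha_u ^+ 2) in
  gamma1 = 1 / 2 -> gamma2 = 1 / 2 ->
  let K := alpha_y * nu *: (L *m invmx M) - alpha_u *: 1%:M in
  let S := nu *: (L *m invmx M *m L^T) + M
           - (alpha_y ^+ 2 * nu + alpha_u ^+ 2)^-1 *: (K *m Pi *m M *m Pi *m K^T) in
  let L1 := Num.sqrt nu *: (L *m diag_sqrt (1%:M - gamma1 *: Pi))
            + diag_sqrt (1%:M - gamma2 *: Pi) *m M in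
  let Shat := L1 *m invmx M *m L1^T in
  forall lambda : R, pencil_eigenvalue S Shat lambda ->
  1 / 2 <= lambda <= 3.
Proof.
(* Neither [0 < n] nor [0 < Num.max alpha_u alpha_y] is needed. *)
move=> _ nu_gt0 au_ge0 ay_ge0 _ m_gt0 psdL p01 M Pi gamma1 gamma2 g1 g2.
move=> K S L1 Shat lambda.
have [ay_neq0 au_def] := balanced_weights nu_gt0 au_ge0 ay_ge0 g1 g2.
rewrite /Shat /L1 g1 g2.
exact: schur_pencil_eigenvalue_bounds.
Qed.
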